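(* Let $l_n,R_n>0$ ($n\in\mathbb N$) satisfy $l_n,R_n\to\infty$, $l_n^2/n\to0$, $n/R_n\to0$, $e^{-\pi l_n/2}R_n\to0$, and let $W_n(z)=\exp\!\big(-l_n\pi-il_n\log\frac{z-n}{z+n}\big)$ for $z\in\mathbb C_+$. Then $W_n(z)\to1$ as $n\to\infty$ uniformly on each compact set $K\subset\mathbb C_+$.
   Context: $\mathbb C_+=\{\operatorname{Im}z>0\}$. For $z\in\mathbb C_+$ one has $\frac{z-n}{z+n}\in\mathbb C_+$, and $\log$ denotes the branch with imaginary part in $(0,\pi)$. *)

From Stdlib Require Import Reals.
From Coquelicot Require Import Coquelicot.

Open Scope R_scope.

Definition Cexp (z : C) : C :=
  (exp (Re z) * cos (Im z), exp (Re z) * sin (Im z)).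

(* Argument in (0, pi) of a point w of the upper half-plane:
   the angle theta in [0,pi] with cos theta = Re w / |w|. *)
Definition Arg_up (w : C) : R := Ratan.acos (Re w / Cmod w).

(* The branch of log on C_+ with imaginary part in (0, pi):
   log w = ln |w| + i Arg w. *)
Definition Clog_up (w : C) : C := (ln (Cmod w), Arg_up w).

Definition W (l : nat -> R) (n : nat) (z : C) : C :=
  Cexp (Cminus (RtoC (- (l n * PI)))
               (Cmult (Cmult Ci (RtoC (l n)))
                      (Clog_up (Cdiv (Cminus z (RtoC (INR n)))
                                     (Cplus z (RtoC (INR n))))))).

From mathcomp Require Import all_boot all_classical all_reals.
From mathcomp Require Import topology normedtype Rstruct Rstruct_topology.

(* Put w = (z - n)/(z + n), so that
   W_n(z) = exp(-l_n (pi - Arg w) - i l_n ln|w|).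
   For z in a compact subset of C_+ and n large, w lies in the upper half-plane
   close to -1, and both pi - Arg w and |ln|w|| are O(1/n) uniformly in z.
   Since |exp(-t + i phi) - 1| <= t + |phi| for t >= 0, this gives
   |W_n(z) - 1| = O(l_n / n), and l_n / n <= l_n^2 / n -> 0 once l_n >= 1. *)

From Stdlib Require Import Reals Lra Lia.
From Coquelicot Require Import Coquelicot.
Open Scope R_scope.

Lemma sin_sqr_le u : sin u ^ 2 <= u ^ 2.
Proof.
assert (abs_sin : forall v, 0 <= v -> Rabs (sin v) <= v).
{ intros v hv. destruct (Req_dec v 0) as [->|hv0]; [rewrite sin_0, Rabs_R0; lra|].
  pose proof (sin_lt_x v ltac:(lra)). pose proof (SIN_bound v).
  apply Rabs_le; split; [|lra].
  destruct (Rle_lt_dec 1 v); [lra|].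
  pose proof PI2_1. assert (0 <= sin v) by (apply sin_ge_0; lra). lra. }
rewrite <- (pow2_abs u), <- (pow2_abs (sin u)). apply pow_incr. split; [apply Rabs_pos|].
destruct (Rle_lt_dec 0 u) as [hu|hu].
- rewrite (Rabs_right u) by lra. apply abs_sin; lra.
- rewrite (Rabs_left u), <- Rabs_Ropp, <- sin_neg by lra. apply abs_sin. lra.
Qed.

Lemma one_sub_cos_le phi : 1 - cos phi <= phi ^ 2 / 2.
Proof.
replace phi with (2 * (phi / 2)) at 1 by field.
rewrite cos_2a_sin. pose proof (sin_sqr_le (phi / 2)). nra.
Qed.

Lemma cos_le_one_sub_sqr_div4 s : Rabs s <= PI / 2 -> cos s <= 1 - s ^ 2 / 4.
Proof.
intros hs. apply Rabs_le_between in hs.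
(* [cos_bound s 0] is the Taylor bound [cos s <= 1 - s^2/2 + s^4/24]. *)
destruct (cos_bound s 0) as [_ h]; try lra.
unfold cos_approx, cos_term in h; simpl in h.
assert (s ^ 2 <= 4) by (pose proof PI_4; nra).
assert (0 <= s ^ 2) by nra.
nra.
Qed.

Lemma acos_sqr_le c : 0 <= c <= 1 -> acos c ^ 2 <= 4 * (1 - c).
Proof.
intros hc. pose proof (acos_bound c) as hs. pose proof (cos_acos c ltac:(lra)) as hcs.
assert (acos c <= PI / 2).
{ destruct (Rle_lt_dec (acos c) (PI / 2)) as [h|h]; [exact h|].
  pose proof (cos_lt_0 (acos c) h ltac:(pose proof PI_RGT_0; lra)). lra. }
pose proof (cos_le_one_sub_sqr_div4 (acos c) ltac:(apply Rabs_le; lra)). lra.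
Qed.

Lemma ln_bounds t : 0 < t -> 1 - / t <= ln t <= t - 1.
Proof.
intros ht. split.
- pose proof (exp_ineq1_le (ln (/ t))) as h.
  rewrite exp_ln, ln_Rinv in h by (try apply Rinv_0_lt_compat; lra). lra.
- pose proof (exp_ineq1_le (ln t)) as h. rewrite exp_ln in h by lra. lra.
Qed.

Lemma Cmod_Cexp_sub_1_le t phi :
  0 <= t -> Cmod (Cminus (Cexp (- t, phi)) (RtoC 1)) <= t + Rabs phi.
Proof.
intros ht.
unfold Cexp, Cmod, Cminus, Cplus, Copp, RtoC, Re, Im; cbn [fst snd].
rewrite <- (sqrt_pow2 (t + Rabs phi)) by (pose proof (Rabs_pos phi); lra).
apply sqrt_le_1_alt.
set (E := exp (- t)).
assert (hE0 : 0 < E) by apply exp_pos.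
assert (hE : 1 - t <= E <= 1).
{ split; [pose proof (exp_ineq1_le (- t)); unfold E; lra|].
  unfold E; rewrite <- exp_0. destruct (Req_dec t 0) as [->|].
  - rewrite Ropp_0. lra.
  - left. apply exp_increasing. lra. }
pose proof (sin2_cos2 phi) as hsc. unfold Rsqr in hsc.
pose proof (one_sub_cos_le phi). rewrite <- (pow2_abs phi) in *.
pose proof (Rabs_pos phi).
nra.
Qed.

Lemma PI_sub_Arg_up_le w : Re w < 0 -> 0 <= Im w ->
  0 <= PI - Arg_up w <= 2 * (Im w / - Re w).
Proof.
destruct w as [u v]; unfold Arg_up, Cmod, Re, Im; cbn [fst snd].
intros hu hv. set (a := - u). set (r := sqrt (u ^ 2 + v ^ 2)).
assert (ha : 0 < a) by (unfold a; lra).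
assert (hr2 : r * r = a ^ 2 + v ^ 2) by (unfold r, a; rewrite sqrt_sqrt; nra).
assert (hr : 0 < r) by (apply sqrt_lt_R0; nra).
assert (har : a <= r) by nra.
replace (u / r) with (- (a / r)) by (unfold a; field; lra).
rewrite acos_opp.
assert (hc : 0 <= a / r <= 1).
{ split; [apply Rdiv_le_0_compat; lra|]. apply Rmult_le_reg_r with r; [lra|]. field_simplify; lra. }
pose proof (acos_bound (a / r)) as hs. pose proof (acos_sqr_le _ hc) as hsq.
assert (h1c : 1 - a / r = v ^ 2 / (r * (r + a))).
{ replace (v ^ 2) with (r * r - a * a) by (rewrite hr2; ring). field; lra. }
assert (v ^ 2 / (r * (r + a)) <= v ^ 2 / (2 * a ^ 2)).
{ apply Rmult_le_compat_l; [nra|]. apply Rinv_le_contravar; nra. }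
assert (v ^ 2 / (2 * a ^ 2) = (v / a) ^ 2 / 2) by (field; lra).
assert (0 <= v / a) by (apply Rdiv_le_0_compat; lra).
nra.
Qed.

Definition cayley (m : R) (z : C) : C :=
  Cdiv (Cminus z (RtoC m)) (Cplus z (RtoC m)).

Lemma cayley_pair m x y : 0 < y ->
  cayley m (x, y) = ((x ^ 2 + y ^ 2 - m ^ 2) / ((x + m) ^ 2 + y ^ 2),
                     2 * m * y / ((x + m) ^ 2 + y ^ 2)).
Proof.
intros hy. assert (0 < (x + m) ^ 2 + y ^ 2) by (pose proof (pow2_ge_0 (x + m)); nra).
unfold cayley, Cdiv, Cminus, Cplus, Cmult, Cinv, Copp, RtoC; cbn [fst snd].
f_equal; field; lra.
Qed.

Lemma Cmod_cayley_sqr m x y : 0 < y ->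
  Cmod (cayley m (x, y)) ^ 2 = ((x - m) ^ 2 + y ^ 2) / ((x + m) ^ 2 + y ^ 2).
Proof.
intros hy. unfold Cmod. rewrite cayley_pair by lra; cbn [fst snd].
rewrite pow2_sqrt by (apply Rplus_le_le_0_compat; apply pow2_ge_0).
field. pose proof (pow2_ge_0 (x + m)). nra.
Qed.

Lemma shift_sqr_ge M m x y : Rabs x <= M -> 4 * M <= m ->
  m ^ 2 / 2 <= (x + m) ^ 2 + y ^ 2.
Proof.
intros hx hm. apply Rabs_le_between in hx. nra.
Qed.

Lemma PI_sub_Arg_cayley_le M m x y : Rabs x <= M -> 0 < y <= M -> 4 * M <= m ->
  0 <= PI - Arg_up (cayley m (x, y)) <= 8 * M / m.
Proof.
intros hx hy hm.
pose proof (shift_sqr_ge M m x y hx hm) as hD.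
apply Rabs_le_between in hx. assert (hm0 : 0 < m) by lra. assert (0 < m ^ 2) by nra.
assert (hQ : x ^ 2 + y ^ 2 <= m ^ 2 / 8) by nra.
assert (hE : m ^ 2 / 2 <= m ^ 2 - x ^ 2 - y ^ 2) by nra.
set (D := (x + m) ^ 2 + y ^ 2) in hD.
assert (hre : Re (cayley m (x, y)) = - ((m ^ 2 - x ^ 2 - y ^ 2) / D)).
{ rewrite cayley_pair by lra. unfold Re, D; cbn [fst]. field. nra. }
assert (him : Im (cayley m (x, y)) = 2 * m * y / D).
{ rewrite cayley_pair by lra. reflexivity. }
assert (Re (cayley m (x, y)) < 0)
  by (rewrite hre; apply Ropp_lt_gt_0_contravar, Rdiv_lt_0_compat; nra).
assert (0 <= Im (cayley m (x, y)))
  by (rewrite him; apply Rdiv_le_0_compat; nra).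
assert (Im (cayley m (x, y)) / - Re (cayley m (x, y)) <= 4 * M / m).
{ rewrite hre, him, Ropp_involutive.
  replace (2 * m * y / D / ((m ^ 2 - x ^ 2 - y ^ 2) / D))
    with (2 * m * y / (m ^ 2 - x ^ 2 - y ^ 2)) by (field; lra).
  apply Rmult_le_reg_r with ((m ^ 2 - x ^ 2 - y ^ 2) * m); [nra|].
  field_simplify; nra. }
pose proof (PI_sub_Arg_up_le (cayley m (x, y))). lra.
Qed.

Lemma Rabs_ln_Cmod_cayley_le M m x y : Rabs x <= M -> 0 < y <= M -> 4 * M <= m ->
  Rabs (ln (Cmod (cayley m (x, y)))) <= 4 * M / m.
Proof.
intros hx hy hm.
pose proof (shift_sqr_ge M m x y hx hm) as hD.
pose proof (shift_sqr_ge M m (- x) y ltac:(now rewrite Rabs_Ropp) hm) as hP.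
replace ((- x + m) ^ 2) with ((x - m) ^ 2) in hP by ring.
apply Rabs_le_between in hx. assert (hm0 : 0 < m) by lra. assert (0 < m ^ 2) by nra.
pose proof (Cmod_cayley_sqr m x y ltac:(lra)) as hw2.
set (w := cayley m (x, y)) in *.
set (D := (x + m) ^ 2 + y ^ 2) in *. set (P := (x - m) ^ 2 + y ^ 2) in *.
assert (hPD : P - D = - 4 * m * x) by (unfold P, D; ring).
set (u := P / D) in *.
assert (hu : u * D = P) by (unfold u; field; lra).
assert (hu0 : 0 < u) by (unfold u; apply Rdiv_lt_0_compat; lra).
assert (hw : 0 < Cmod w).
{ destruct (Cmod_ge_0 w) as [h|h]; [exact h|]. rewrite <- h in hw2. simpl in hw2. lra. }
assert (hln : ln (Cmod w) = ln u / 2).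
{ rewrite <- hw2, ln_pow by exact hw. simpl. field. }
destruct (ln_bounds u hu0) as [hlo hhi].
set (k := 8 * M / m).
assert (hk : k * m = 8 * M) by (unfold k; field; lra).
assert (hk0 : 0 <= k) by (unfold k; apply Rdiv_le_0_compat; lra).
assert (hkD : 4 * m * M <= k * D) by nra.
assert (hkP : 4 * m * M <= k * P) by nra.
assert (u - 1 <= k).
{ apply Rmult_le_reg_r with D; [lra|]. nra. }
assert (- k <= 1 - / u).
{ assert (hv : / u * P = D) by (rewrite <- hu; field; lra).
  apply Rmult_le_reg_r with P; [lra|]. nra. }
rewrite hln. apply Rabs_le. unfold k in *. split; lra.
Qed.

Lemma W_as_Cexp l n z :
  W l n z = Cexp (- (l n * (PI - Arg_up (cayley (INR n) z))),
                  - (l n * ln (Cmod (cayley (INR n) z)))).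
Proof.
unfold W, cayley. set (w := Cdiv _ _).
unfold Cexp, Clog_up, Cminus, Cmult, Cplus, Copp, Ci, RtoC, Re, Im; cbn [fst snd].
f_equal; f_equal; f_equal; ring.
Qed.

Lemma Cmod_W_sub_1_le l n M z : 0 <= l n ->
  Rabs (Re z) <= M -> 0 < Im z <= M -> 4 * M <= INR n ->
  Cmod (Cminus (W l n z) (RtoC 1)) <= 12 * M * (l n / INR n).
Proof.
destruct z as [x y]; unfold Re, Im; cbn [fst snd]. intros hl hx hy hm.
pose proof (PI_sub_Arg_cayley_le M (INR n) x y hx hy hm) as hA.
pose proof (Rabs_ln_Cmod_cayley_le M (INR n) x y hx hy hm) as hL.
rewrite W_as_Cexp.
eapply Rle_trans; [apply Cmod_Cexp_sub_1_le; nra|].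
rewrite Rabs_Ropp, Rabs_mult, (Rabs_right (l n)) by lra.
replace (12 * M * (l n / INR n)) with (l n * (8 * M / INR n) + l n * (4 * M / INR n))
  by (field; lra).
apply Rplus_le_compat; apply Rmult_le_compat_l; lra.
Qed.

Lemma is_lim_seq_div_INR_0 (l : nat -> R) :
  is_lim_seq l p_infty -> is_lim_seq (fun n => l n ^ 2 / INR n) 0 ->
  is_lim_seq (fun n => l n / INR n) 0.
Proof.
intros hl hl2.
apply is_lim_seq_le_le_loc with (fun _ => 0) (fun n => l n ^ 2 / INR n); [|apply is_lim_seq_const|exact hl2].
destruct (proj2 (is_lim_seq_spec _ _) hl 1) as [N hN].
exists (S N). intros n hn. specialize (hN n ltac:(lia)).
assert (0 < INR n) by (apply lt_0_INR; lia).
split.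
- apply Rdiv_le_0_compat; lra.
- apply Rmult_le_compat_r; [apply Rlt_le, Rinv_0_lt_compat; lra|nra].
Qed.

From mathcomp Require Import all_boot all_order all_classical all_reals.
From mathcomp Require Import topology normedtype Rstruct Rstruct_topology.
Import numFieldNormedType.Exports Order.TTheory.
Open Scope R_scope.

Lemma compact_subset_square (K : classical_sets.set (R * R)) : compact K ->
  exists M, 0 < M /\ forall z, K z -> Rabs (fst z) <= M /\ Rabs (snd z) <= M.
Proof.
move=> cK.
have [M [_ HM]] := compact_bounded
  (V := ((R : realType) * (R : realType))%type : normedModType (R : realType)) cK.
exists (Rmax 1 (M + 1)); split; first by apply: Rlt_le_trans (Rmax_l _ _); lra.
move=> z Kz.
have hM : (M < Rmax 1 (M + 1))%O by apply/RltP; apply: Rlt_le_trans (Rmax_r _ _); lra.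
have := HM _ hM z Kz.
rewrite /= prod_normE ge_max => /andP [h1 h2].
by split; rewrite RabsE; apply/RleP.
Qed.

Theorem lemma3 (l Rn : nat -> R)
  (hl : forall n, 0 < l n) (hR : forall n, 0 < Rn n)
  (hl_inf : is_lim_seq l p_infty)
  (hR_inf : is_lim_seq Rn p_infty)
  (hl2 : is_lim_seq (fun n => (l n) ^ 2 / INR n) 0)
  (hnR : is_lim_seq (fun n => INR n / Rn n) 0)
  (hexp : is_lim_seq (fun n => exp (- PI * l n / 2) * Rn n) 0) :
  forall K : classical_sets.set (R * R),
    compact K ->
    (forall z : C, K z -> 0 < Im z) ->
    forall eps : R, 0 < eps ->
      exists N : nat, forall n : nat, (N <= n)%coq_nat ->
        forall z : C, K z -> Cmod (Cminus (W l n z) (RtoC 1)) < eps.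
Proof.
intros K cK hK eps heps.
destruct (compact_subset_square K cK) as [M [hM hKM]].
assert (hd : 0 < eps / (12 * M)) by (apply Rdiv_lt_0_compat; lra).
destruct (proj2 (is_lim_seq_spec _ _) (is_lim_seq_div_INR_0 l hl_inf hl2)
            (mkposreal _ hd)) as [N1 hN1].
destruct (proj2 (is_lim_seq_spec _ _) is_lim_seq_INR (4 * M)) as [N2 hN2].
exists (Nat.max N1 N2). intros n hn z Kz.
specialize (hN1 n ltac:(lia)). specialize (hN2 n ltac:(lia)).
cbn in hN1. rewrite Rminus_0_r in hN1. apply Rabs_lt_between in hN1.
destruct (hKM z Kz) as [hx hy]. apply Rabs_le_between in hy.
pose proof (hl n).
apply Rle_lt_trans with (12 * M * (l n / INR n)).
- apply Cmod_W_sub_1_le; [lra | exact hx | split; [exact (hK z Kz) | apply hy] | lra].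
- replace eps with (12 * M * (eps / (12 * M))) by (field; lra).
  apply Rmult_lt_compat_l; lra.
Qed.
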